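(* With $H(\alpha):=H(\theta(\alpha))$ and $R(\alpha):=\sum_{i=1}^N\overline\theta_i(\alpha)\frac{\beta_i^2}{2}$: (1) $H(1)=-\sum_{i,j}\pi_iP_{ij}\log P_{ij}$ and $R(1)=\sum_{i=1}^N\pi_i\frac{\beta_i^2}{2}$; (2) $H(0)=\log\rho_0$; (3) the function $\alpha\mapsto H(\alpha)-\alpha^2R(\alpha)$ is non-increasing on $[0,1]$.
   Context: $V=\{1,\dots,N\}$; $P$ row-stochastic irreducible aperiodic with stationary distribution $\pi>0$; $\beta\in\mathbb R^N$; $\rho_0$ is the spectral radius of the 0-1 matrix $P_0$ with $(P_0)_{ij}=1$ iff $P_{ij}>0$. For $\alpha\in\mathbb R$ define $M(\alpha)\in\mathbb R^{N\times N}$ by $[M(\alpha)]_{ij}=P_{ij}^\alpha e^{-\alpha(1-\alpha)\beta_i^2/2}$ if $P_{ij}>0$ and $[M(\alpha)]_{ij}=0$ if $P_{ij}=0$ (so $M(0)=P_0$). Let $\lambda(\alpha)$ be the Perron root (spectral radius) of $M(\alpha)$ and $v(\alpha)>0$ a right Perron eigenvector. Let $Q(\alpha)_{ij}=\frac{[M(\alpha)]_{ij}v_j(\alpha)}{\lambda(\alpha)v_i(\alpha)}$ (a stochastic, irreducible, aperiodic matrix), $\overline\theta(\alpha)$ its stationary distribution, and $\theta(\alpha)_{ij}=\overline\theta_i(\alpha)Q(\alpha)_{ij}$. $H(\theta)=-\sum_{i,j}\theta_{ij}\log(\theta_{ij}/\overline\theta_i)$ with $\overline\theta=\theta\mathbf1$,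 $0\log0=0$. *)

From Stdlib Require Import Reals Lra Lia Arith.
Open Scope R_scope.

(* Vectors/matrices indexed by nat; only indices 0..N-1 are relevant. *)

Fixpoint rsum (n : nat) (f : nat -> R) : R :=
  match n with
  | O => 0
  | S m => rsum m f + f m
  end.

Definition mmul (N : nat) (A B : nat -> nat -> R) : nat -> nat -> R :=
  fun i j => rsum N (fun k => A i k * B k j).

Definition mid : nat -> nat -> R := fun i j => if Nat.eq_dec i j then 1 else 0.

Fixpoint mpow (N : nat) (A : nat -> nat -> R) (k : nat) : nat -> nat -> R :=
  match k with
  | O => mid
  | S m => mmul N (mpow N A m) A
  end.

Definition row_stochastic (N : nat) (P : nat -> nat -> R) : Prop :=
  (forall i j, (i < N)%nat -> (j < N)%nat -> 0 <= P i j) /\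
  (forall i, (i < N)%nat -> rsum N (fun j => P i j) = 1).

Definition irreducible (N : nat) (P : nat -> nat -> R) : Prop :=
  forall i j, (i < N)%nat -> (j < N)%nat -> exists k : nat, 0 < mpow N P k i j.

Definition aperiodic (N : nat) (P : nat -> nat -> R) : Prop :=
  forall i, (i < N)%nat ->
    forall d : nat,
      (forall k : nat, (1 <= k)%nat -> 0 < mpow N P k i i -> Nat.divide d k) ->
      d = 1%nat.

Definition stationary (N : nat) (P : nat -> nat -> R) (p : nat -> R) : Prop :=
  (forall i, (i < N)%nat -> 0 <= p i) /\
  rsum N p = 1 /\
  (forall j, (j < N)%nat -> rsum N (fun i => p i * P i j) = p j).

(* (a,b) = a + i b is a complex eigenvalue of the real matrix A, with a
   nonzero complex eigenvector x + i y *)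
Definition complex_eigenvalue (N : nat) (A : nat -> nat -> R) (a b : R) : Prop :=
  exists x y : nat -> R,
    (exists i, (i < N)%nat /\ (x i <> 0 \/ y i <> 0)) /\
    (forall i, (i < N)%nat ->
       rsum N (fun j => A i j * x j) = a * x i - b * y i /\
       rsum N (fun j => A i j * y j) = b * x i + a * y i).

Definition spectral_radius (N : nat) (A : nat -> nat -> R) (r : R) : Prop :=
  (exists a b, complex_eigenvalue N A a b /\ sqrt (a * a + b * b) = r) /\
  (forall a b, complex_eigenvalue N A a b -> sqrt (a * a + b * b) <= r).

Definition P0 (P : nat -> nat -> R) : nat -> nat -> R :=
  fun i j => if Rlt_dec 0 (P i j) then 1 else 0.

Definition Mmat (P : nat -> nat -> R) (beta : nat -> R) (alpha : R) : nat -> nat -> R :=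
  fun i j => if Rlt_dec 0 (P i j)
             then Rpower (P i j) alpha * exp (- alpha * (1 - alpha) * (beta i)^2 / 2)
             else 0.

Definition Qmat (P : nat -> nat -> R) (beta : nat -> R) (alpha lam : R) (v : nat -> R)
  : nat -> nat -> R :=
  fun i j => Mmat P beta alpha i j * v j / (lam * v i).

Definition theta (P : nat -> nat -> R) (beta : nat -> R) (alpha lam : R) (v thbar : nat -> R)
  : nat -> nat -> R :=
  fun i j => thbar i * Qmat P beta alpha lam v i j.

Definition xlog (a b : R) : R := if Req_EM_T a 0 then 0 else a * ln (a / b).

Definition Hent (N : nat) (th : nat -> nat -> R) : R :=
  - rsum N (fun i => rsum N (fun j => xlog (th i j) (rsum N (fun k => th i k)))).

Definition xlnx (x : R) : R := if Req_EM_T x 0 then 0 else x * ln x.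

(* For 0 <= alpha <= 1 and every stationary pair law th supported on the transitions of P,
     H(th) + alpha E_th[ln P] - alpha (1 - alpha) E_th[beta_i^2 / 2] <= ln lambda(alpha),
   with equality at th = theta(alpha).  Indeed the left side equals
   H(th) + E_th[ln Q(alpha)] + ln lambda(alpha), since ln Q(alpha) differs from
   ln M(alpha) - ln lambda(alpha) by a potential difference that a stationary pair law does
   not see, and H(th) + E_th[ln Q] <= 0 is Gibbs' inequality, with equality when the
   transitions of th are those of Q.
   At alpha = 1 the positive eigenvector of M(1) = P is constant by the maximum principle,
   so lambda(1) = 1, Q(1) = P and theta(1) = pi P, giving (1); at alpha = 0, M(0) = P_0
   gives (2).  For (3), inserting theta(a) into the inequality at b and theta(b) into the
   one at a, and combining the two, leaves
   H(b) - H(a) <= a b (R(b) - R(a)) <= b^2 R(b) - a^2 R(a), as R >= 0. *)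

From Stdlib Require Import Reals Lra Lia FunctionalExtensionality.
Open Scope R_scope.

Lemma rsum_ext n f g : (forall i, (i < n)%nat -> f i = g i) -> rsum n f = rsum n g.
Proof.
  induction n as [|n IH]; intros H; simpl; [reflexivity|].
  rewrite IH by (intros; apply H; lia). rewrite H by lia. reflexivity.
Qed.

Lemma rsum_zero n : rsum n (fun _ => 0) = 0.
Proof. induction n as [|n IH]; simpl; [|rewrite IH]; ring. Qed.

Lemma rsum_plus n f g : rsum n (fun i => f i + g i) = rsum n f + rsum n g.
Proof. induction n as [|n IH]; simpl; [|rewrite IH]; ring. Qed.

Lemma rsum_minus n f g : rsum n (fun i => f i - g i) = rsum n f - rsum n g.
Proof. induction n as [|n IH]; simpl; [|rewrite IH]; ring. Qed.

Lemma rsum_opp n f : rsum n (fun i => - f i) = - rsum n f.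
Proof. induction n as [|n IH]; simpl; [|rewrite IH]; ring. Qed.

Lemma rsum_scal_l n c f : rsum n (fun i => c * f i) = c * rsum n f.
Proof. induction n as [|n IH]; simpl; [|rewrite IH]; ring. Qed.

Lemma rsum_scal_r n c f : rsum n (fun i => f i * c) = rsum n f * c.
Proof. induction n as [|n IH]; simpl; [|rewrite IH]; ring. Qed.

Lemma rsum_swap n m f :
  rsum n (fun i => rsum m (fun j => f i j)) = rsum m (fun j => rsum n (fun i => f i j)).
Proof.
  induction n as [|n IH]; simpl.
  - symmetry; apply rsum_zero.
  - rewrite IH, <- rsum_plus; reflexivity.
Qed.

Lemma rsum_le n f g : (forall i, (i < n)%nat -> f i <= g i) -> rsum n f <= rsum n g.
Proof.
  induction n as [|n IH]; intros H; simpl; [lra|].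
  apply Rplus_le_compat; [apply IH; intros|apply H]; auto with arith.
Qed.

Lemma rsum_nonneg n f : (forall i, (i < n)%nat -> 0 <= f i) -> 0 <= rsum n f.
Proof. intros H; rewrite <- (rsum_zero n); apply rsum_le; exact H. Qed.

Lemma rsum_term_le n f i :
  (forall k, (k < n)%nat -> 0 <= f k) -> (i < n)%nat -> f i <= rsum n f.
Proof.
  induction n as [|n IH]; intros H Hi; simpl; [lia|].
  assert (0 <= rsum n f) by (apply rsum_nonneg; intros; apply H; lia).
  assert (0 <= f n) by (apply H; lia).
  destruct (Nat.eq_dec i n) as [->|Hin]; [lra|].
  assert (f i <= rsum n f) by (apply IH; [intros; apply H|]; lia).
  lra.
Qed.

Lemma rsum_eq0_nonneg n f :
  (forall i, (i < n)%nat -> 0 <= f i) -> rsum n f = 0 -> forall i, (i < n)%nat -> f i = 0.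
Proof.
  intros H Hs i Hi.
  pose proof (rsum_term_le n f i H Hi). pose proof (H i Hi). lra.
Qed.

Lemma rsum_pos_term n f : 0 < rsum n f -> exists i, (i < n)%nat /\ 0 < f i.
Proof.
  induction n as [|n IH]; simpl; intros H; [lra|].
  destruct (Rlt_dec 0 (f n)) as [Hn|Hn]; [exists n; split; auto|].
  destruct IH as [i [Hi Hf]]; [lra|]. exists i; split; auto.
Qed.

Lemma exists_argmax n f :
  (0 < n)%nat -> exists k, (k < n)%nat /\ forall i, (i < n)%nat -> f i <= f k.
Proof.
  induction n as [|n IH]; intros Hn; [lia|].
  destruct (Nat.eq_dec n 0) as [->|Hn0].
  { exists 0%nat; split; [lia|]; intros i Hi; replace i with 0%nat by lia; lra. }
  destruct IH as [k [Hk Hmax]]; [lia|].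
  destruct (Rle_dec (f n) (f k)).
  - exists k; split; [lia|]; intros i Hi.
    destruct (Nat.eq_dec i n) as [->|]; [auto|apply Hmax; lia].
  - exists n; split; [lia|]; intros i Hi.
    destruct (Nat.eq_dec i n) as [->|]; [lra|].
    assert (f i <= f k) by (apply Hmax; lia). lra.
Qed.

Lemma exists_argmin n f :
  (0 < n)%nat -> exists k, (k < n)%nat /\ forall i, (i < n)%nat -> f k <= f i.
Proof.
  intros Hn; destruct (exists_argmax n (fun i => - f i) Hn) as [k [Hk Hmax]].
  exists k; split; auto; intros i Hi; specialize (Hmax i Hi); lra.
Qed.

Definition edge_mean (N : nat) (th f : nat -> nat -> R) : R :=
  rsum N (fun i => rsum N (fun j => th i j * f i j)).

Lemma edge_mean_ext_supp N th f g :
  (forall i j, (i < N)%nat -> (j < N)%nat -> th i j <> 0 -> f i j = g i j) ->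
  edge_mean N th f = edge_mean N th g.
Proof.
  intros H; unfold edge_mean.
  apply rsum_ext; intros i Hi; apply rsum_ext; intros j Hj.
  destruct (Req_dec (th i j) 0) as [->|Hne]; [ring|now rewrite H].
Qed.

Lemma edge_mean_plus N th f g :
  edge_mean N th (fun i j => f i j + g i j) = edge_mean N th f + edge_mean N th g.
Proof.
  unfold edge_mean; rewrite <- rsum_plus; apply rsum_ext; intros i _.
  rewrite <- rsum_plus; apply rsum_ext; intros; ring.
Qed.

Lemma edge_mean_minus N th f g :
  edge_mean N th (fun i j => f i j - g i j) = edge_mean N th f - edge_mean N th g.
Proof.
  unfold edge_mean; rewrite <- rsum_minus; apply rsum_ext; intros i _.
  rewrite <- rsum_minus; apply rsum_ext; intros; ring.
Qed.

Lemma edge_mean_scal N c th f :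
  edge_mean N th (fun i j => c * f i j) = c * edge_mean N th f.
Proof.
  unfold edge_mean; rewrite <- rsum_scal_l; apply rsum_ext; intros i _.
  rewrite <- rsum_scal_l; apply rsum_ext; intros; ring.
Qed.

Lemma edge_mean_const N th c :
  edge_mean N th (fun _ _ => c) = c * edge_mean N th (fun _ _ => 1).
Proof.
  rewrite <- edge_mean_scal; unfold edge_mean.
  apply rsum_ext; intros i _; apply rsum_ext; intros; ring.
Qed.

Lemma edge_mean_potential N th g :
  (forall j, (j < N)%nat -> rsum N (fun i => th i j) = rsum N (fun k => th j k)) ->
  edge_mean N th (fun i j => g j - g i) = 0.
Proof.
  intros Hbal; unfold edge_mean.
  transitivity (rsum N (fun i => rsum N (fun j => th i j * g j))
                - rsum N (fun i => rsum N (fun j => th i j) * g i)).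
  { rewrite <- rsum_minus; apply rsum_ext; intros i _.
    rewrite <- rsum_scal_r, <- rsum_minus; apply rsum_ext; intros; ring. }
  rewrite (rsum_swap N N (fun i j => th i j * g j)).
  apply Rminus_diag_eq, rsum_ext; intros j Hj.
  rewrite rsum_scal_r, Hbal by exact Hj; reflexivity.
Qed.

Lemma ln_le_sub1 x : 0 < x -> ln x <= x - 1.
Proof. intros Hx; pose proof (exp_ineq1_le (ln x)); rewrite exp_ln in H by exact Hx; lra. Qed.

Lemma ln_div x y : 0 < x -> 0 < y -> ln (x / y) = ln x - ln y.
Proof. intros Hx Hy; unfold Rdiv; rewrite ln_mult, ln_Rinv; [ring|auto|auto|now apply Rinv_0_lt_compat]. Qed.

Lemma xlog_gibbs t r q : 0 < t -> 0 < r -> 0 < q -> t * ln q - t * ln (t / r) <= r * q - t.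
Proof.
  intros Ht Hr Hq.
  assert (Hx : 0 < q * r / t) by (apply Rdiv_lt_0_compat; nra).
  pose proof (ln_le_sub1 _ Hx) as Hln.
  rewrite ln_div, ln_mult in Hln by nra. rewrite ln_div by assumption.
  apply Rmult_le_compat_l with (r := t) in Hln; [|lra].
  replace (t * (q * r / t - 1)) with (r * q - t) in Hln by (field; lra). lra.
Qed.

Lemma Hent_plus_edge_mean N th f :
  Hent N th + edge_mean N th f =
  rsum N (fun i => rsum N (fun j => th i j * f i j - xlog (th i j) (rsum N (fun k => th i k)))).
Proof.
  unfold Hent, edge_mean; rewrite <- rsum_opp, <- rsum_plus.
  apply rsum_ext; intros i _; rewrite <- rsum_opp, <- rsum_plus.
  apply rsum_ext; intros; ring.
Qed.

(* Gibbs' inequality in each row, for the conditional law of [th i .] against [Q i .]. *)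
Lemma Hent_cross_le N th Q :
  (forall i j, (i < N)%nat -> (j < N)%nat -> 0 <= th i j) ->
  (forall i j, (i < N)%nat -> (j < N)%nat -> 0 <= Q i j) ->
  (forall i j, (i < N)%nat -> (j < N)%nat -> 0 < th i j -> 0 < Q i j) ->
  (forall i, (i < N)%nat -> rsum N (fun j => Q i j) = 1) ->
  Hent N th + edge_mean N th (fun i j => ln (Q i j)) <= 0.
Proof.
  intros Hth HQ Hsupp Hrow; rewrite Hent_plus_edge_mean, <- (rsum_zero N).
  apply rsum_le; intros i Hi.
  set (r := rsum N (fun k => th i k)).
  apply Rle_trans with (rsum N (fun j => r * Q i j - th i j)).
  2: { right; rewrite rsum_minus, rsum_scal_l, Hrow by exact Hi.
        change (rsum N (th i)) with r; ring. }
  apply rsum_le; intros j Hj; unfold xlog.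
  assert (Hr : th i j <= r) by (apply rsum_term_le; auto).
  destruct (Req_EM_T (th i j) 0) as [Hz|Hnz].
  - rewrite Hz in Hr |- *; pose proof (HQ i j Hi Hj); nra.
  - assert (0 < th i j) by (destruct (Hth i j Hi Hj); [assumption|congruence]).
    apply xlog_gibbs; auto; lra.
Qed.

Lemma Hent_cross_eq N p Q :
  (forall i j, (i < N)%nat -> (j < N)%nat -> 0 <= Q i j) ->
  (forall i, (i < N)%nat -> rsum N (fun j => Q i j) = 1) ->
  Hent N (fun i j => p i * Q i j) + edge_mean N (fun i j => p i * Q i j) (fun i j => ln (Q i j)) = 0.
Proof.
  intros HQ Hrow; rewrite Hent_plus_edge_mean, <- (rsum_zero N).
  apply rsum_ext; intros i Hi; rewrite <- (rsum_zero N).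
  rewrite rsum_scal_l, Hrow, Rmult_1_r by exact Hi.
  apply rsum_ext; intros j Hj; unfold xlog.
  destruct (Req_EM_T (p i * Q i j) 0) as [Hz|Hnz]; [rewrite Hz; ring|].
  assert (p i <> 0) by (intros Hp; apply Hnz; rewrite Hp; ring).
  replace (p i * Q i j / p i) with (Q i j) by (field; assumption). ring.
Qed.

Lemma Mmat_nonneg P beta alpha i j : 0 <= Mmat P beta alpha i j.
Proof.
  unfold Mmat; destruct (Rlt_dec 0 (P i j)); [|lra].
  left; apply Rmult_lt_0_compat; apply exp_pos.
Qed.

Lemma Mmat_pos P beta alpha i j : 0 < P i j -> 0 < Mmat P beta alpha i j.
Proof.
  intros HP; unfold Mmat; destruct (Rlt_dec 0 (P i j)); [|contradiction].
  apply Rmult_lt_0_compat; apply exp_pos.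
Qed.

Lemma Mmat_support P beta alpha i j : Mmat P beta alpha i j <> 0 -> 0 < P i j.
Proof. unfold Mmat; destruct (Rlt_dec 0 (P i j)); [auto|congruence]. Qed.

Lemma ln_Mmat P beta alpha i j : 0 < P i j ->
  ln (Mmat P beta alpha i j) = alpha * ln (P i j) - alpha * (1 - alpha) * (beta i ^ 2 / 2).
Proof.
  intros HP; unfold Mmat; destruct (Rlt_dec 0 (P i j)); [|contradiction].
  rewrite ln_mult, ln_Rpower, ln_exp by apply exp_pos; field.
Qed.

Lemma Mmat_1 P beta i j : 0 <= P i j -> Mmat P beta 1 i j = P i j.
Proof.
  intros HP; unfold Mmat; destruct (Rlt_dec 0 (P i j)); [|lra].
  rewrite Rpower_1, Rminus_diag, Rmult_0_r, Rmult_0_l by assumption.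
  unfold Rdiv; rewrite Rmult_0_l, exp_0; ring.
Qed.

Lemma Mmat_0 P beta : Mmat P beta 0 = P0 P.
Proof.
  do 2 (apply functional_extensionality; intro).
  unfold Mmat, P0; destruct (Rlt_dec 0 _); [|reflexivity].
  rewrite Rpower_O by assumption.
  rewrite Ropp_0, !Rmult_0_l; unfold Rdiv; rewrite Rmult_0_l, exp_0; ring.
Qed.

(* The pair laws [th i j] of stationary chains moving along the transitions of [P];
   stationarity is the balance of column and row sums. *)
Record edge_measure (N : nat) (P th : nat -> nat -> R) : Prop := {
  em_nonneg : forall i j, (i < N)%nat -> (j < N)%nat -> 0 <= th i j;
  em_support : forall i j, (i < N)%nat -> (j < N)%nat -> 0 < th i j -> 0 < P i j;
  em_balanced : forall j, (j < N)%nat -> rsum N (fun i => th i j) = rsum N (fun k => th j k);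
  em_mass : edge_mean N th (fun _ _ => 1) = 1 }.

Lemma em_support_nz N P th : edge_measure N P th ->
  forall i j, (i < N)%nat -> (j < N)%nat -> th i j <> 0 -> 0 < P i j.
Proof.
  intros Hth i j Hi Hj Hnz; apply (em_support _ _ _ Hth); auto.
  destruct (em_nonneg _ _ _ Hth i j Hi Hj); [assumption|congruence].
Qed.

Definition tilted_entropy (N : nat) (P : nat -> nat -> R) (beta : nat -> R) (alpha : R)
  (th : nat -> nat -> R) : R :=
  Hent N th + alpha * edge_mean N th (fun i j => ln (P i j))
  - alpha * (1 - alpha) * edge_mean N th (fun i _ => beta i ^ 2 / 2).

Lemma edge_mean_ln_Mmat N P beta alpha th :
  (forall i j, (i < N)%nat -> (j < N)%nat -> th i j <> 0 -> 0 < P i j) ->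
  edge_mean N th (fun i j => ln (Mmat P beta alpha i j)) =
  alpha * edge_mean N th (fun i j => ln (P i j))
  - alpha * (1 - alpha) * edge_mean N th (fun i _ => beta i ^ 2 / 2).
Proof.
  intros Hsupp; rewrite <- !edge_mean_scal, <- edge_mean_minus.
  apply edge_mean_ext_supp; intros i j Hi Hj Hth.
  rewrite ln_Mmat by auto; ring.
Qed.

Section PerronTilt.

Variables (N : nat) (P : nat -> nat -> R) (beta : nat -> R) (alpha lam : R) (v : nat -> R).
Hypothesis Hlam_pos : 0 < lam.
Hypothesis Hv_pos : forall i, (i < N)%nat -> 0 < v i.
Hypothesis HMv : forall i, (i < N)%nat ->
  rsum N (fun j => Mmat P beta alpha i j * v j) = lam * v i.

Let Q := Qmat P beta alpha lam v.

Lemma Qmat_nonneg i j : (i < N)%nat -> (j < N)%nat -> 0 <= Q i j.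
Proof.
  intros Hi Hj; unfold Q, Qmat.
  pose proof (Mmat_nonneg P beta alpha i j); pose proof (Hv_pos i Hi); pose proof (Hv_pos j Hj).
  apply Rmult_le_pos; [nra|left; apply Rinv_0_lt_compat; nra].
Qed.

Lemma Qmat_pos i j : (i < N)%nat -> (j < N)%nat -> 0 < P i j -> 0 < Q i j.
Proof.
  intros Hi Hj HP; unfold Q, Qmat.
  pose proof (Mmat_pos P beta alpha i j HP); pose proof (Hv_pos i Hi); pose proof (Hv_pos j Hj).
  apply Rdiv_lt_0_compat; nra.
Qed.

Lemma Qmat_row_sum i : (i < N)%nat -> rsum N (fun j => Q i j) = 1.
Proof.
  intros Hi; unfold Q, Qmat; pose proof (Hv_pos i Hi).
  transitivity (rsum N (fun j => Mmat P beta alpha i j * v j) * / (lam * v i)).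
  - rewrite <- rsum_scal_r; apply rsum_ext; intros; reflexivity.
  - rewrite HMv by exact Hi; field; lra.
Qed.

(* [ln Q i j] is [ln M i j - ln lam] up to the potential difference [ln v j - ln v i]. *)
Lemma edge_mean_ln_Qmat th : edge_measure N P th ->
  edge_mean N th (fun i j => ln (Q i j)) =
  edge_mean N th (fun i j => ln (Mmat P beta alpha i j)) - ln lam.
Proof.
  intros Hem; pose proof Hem as [_ _ Hbal Hmass].
  rewrite <- (Rplus_0_r (edge_mean N th (fun i j => ln (Mmat P beta alpha i j)))).
  rewrite <- (edge_mean_potential N th (fun i => ln (v i)) Hbal).
  rewrite <- edge_mean_plus, <- (Rmult_1_r (ln lam)), <- Hmass, <- edge_mean_const.
  rewrite <- edge_mean_minus.
  apply edge_mean_ext_supp; intros i j Hi Hj Hth.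
  assert (HP : 0 < P i j) by exact (em_support_nz N P th Hem i j Hi Hj Hth).
  pose proof (Mmat_pos P beta alpha i j HP); pose proof (Hv_pos i Hi); pose proof (Hv_pos j Hj).
  unfold Q, Qmat; rewrite ln_div, !ln_mult by nra; ring.
Qed.

Lemma tilted_entropy_cross th : edge_measure N P th ->
  tilted_entropy N P beta alpha th = Hent N th + edge_mean N th (fun i j => ln (Q i j)) + ln lam.
Proof.
  intros Hth.
  rewrite edge_mean_ln_Qmat, edge_mean_ln_Mmat by eauto using em_support_nz.
  unfold tilted_entropy; ring.
Qed.

Lemma tilted_entropy_le th : edge_measure N P th -> tilted_entropy N P beta alpha th <= ln lam.
Proof.
  intros Hth; rewrite tilted_entropy_cross by exact Hth.
  enough (Hent N th + edge_mean N th (fun i j => ln (Q i j)) <= 0) by lra.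
  apply Hent_cross_le.
  - exact (em_nonneg _ _ _ Hth).
  - exact Qmat_nonneg.
  - intros i j Hi Hj Hpos; apply Qmat_pos; auto; exact (em_support _ _ _ Hth i j Hi Hj Hpos).
  - exact Qmat_row_sum.
Qed.

Variable thbar : nat -> R.
Hypothesis thbar_stat : stationary N Q thbar.

Lemma theta_edge_measure : edge_measure N P (theta P beta alpha lam v thbar).
Proof.
  destruct thbar_stat as [Hnn [Hmass Hstat]]; unfold theta.
  assert (Hrow : forall i, (i < N)%nat -> rsum N (fun k => thbar i * Q i k) = thbar i).
  { intros i Hi; rewrite rsum_scal_l, Qmat_row_sum by exact Hi; ring. }
  split.
  - intros i j Hi Hj; apply Rmult_le_pos; [auto|apply Qmat_nonneg; auto].
  - intros i j Hi Hj Hpos; apply (Mmat_support P beta alpha i j); intros Hz.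
    unfold Qmat in Hpos; rewrite Hz in Hpos; lra.
  - intros j Hj; rewrite Hrow, <- Hstat by exact Hj; reflexivity.
  - transitivity (rsum N thbar); [|exact Hmass]; unfold edge_mean; apply rsum_ext; intros i Hi.
    transitivity (rsum N (fun k => thbar i * Q i k)); [|exact (Hrow i Hi)].
    apply rsum_ext; intros; unfold Q; ring.
Qed.

Lemma tilted_entropy_theta : tilted_entropy N P beta alpha (theta P beta alpha lam v thbar) = ln lam.
Proof.
  rewrite tilted_entropy_cross by exact theta_edge_measure.
  pose proof (Hent_cross_eq N thbar Q Qmat_nonneg Qmat_row_sum) as Hgibbs.
  unfold theta; fold Q; lra.
Qed.

Lemma edge_mean_theta_row (g : nat -> R) :
  edge_mean N (theta P beta alpha lam v thbar) (fun i _ => g i) = rsum N (fun i => thbar i * g i).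
Proof.
  unfold edge_mean, theta; apply rsum_ext; intros i Hi.
  transitivity (thbar i * rsum N (fun j => Q i j) * g i).
  - rewrite <- rsum_scal_l, <- rsum_scal_r; apply rsum_ext; intros; unfold Q; ring.
  - rewrite Qmat_row_sum by exact Hi; ring.
Qed.

End PerronTilt.

Lemma mpow_pos_closed N A (S : nat -> Prop) :
  (forall i j, (i < N)%nat -> (j < N)%nat -> 0 <= A i j) ->
  (forall i j, (i < N)%nat -> (j < N)%nat -> 0 < A i j -> S i -> S j) ->
  forall k i j, (i < N)%nat -> (j < N)%nat -> 0 < mpow N A k i j -> S i -> S j.
Proof.
  intros Hnn Hstep k; induction k as [|k IH]; intros i j Hi Hj Hpos HS; simpl in Hpos.
  - unfold mid in Hpos; destruct (Nat.eq_dec i j) as [<-|]; [exact HS|lra].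
  - destruct (rsum_pos_term _ _ Hpos) as [l [Hl Hterm]].
    pose proof (Hnn l j Hl Hj) as Hlj.
    assert (0 < A l j) by (destruct Hlj as [|Hz]; [assumption|rewrite <- Hz in Hterm; lra]).
    assert (0 < mpow N A k i l) by nra.
    apply (Hstep l j); auto; apply (IH i l); auto.
Qed.

Lemma stochastic_average_le N P v c i : row_stochastic N P -> (i < N)%nat ->
  (forall j, (j < N)%nat -> v j <= c) -> rsum N (fun j => P i j * v j) <= c.
Proof.
  intros [Hnn Hrow] Hi Hv; rewrite <- (Rmult_1_l c), <- (Hrow i Hi), <- rsum_scal_r.
  apply rsum_le; intros j Hj; apply Rmult_le_compat_l; auto.
Qed.

Lemma stochastic_average_ge N P v c i : row_stochastic N P -> (i < N)%nat ->
  (forall j, (j < N)%nat -> c <= v j) -> c <= rsum N (fun j => P i j * v j).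
Proof.
  intros [Hnn Hrow] Hi Hv; rewrite <- (Rmult_1_l c), <- (Hrow i Hi), <- rsum_scal_r.
  apply rsum_le; intros j Hj; apply Rmult_le_compat_l; auto.
Qed.

Lemma stochastic_pos_eigenvalue N P v lam : (0 < N)%nat -> row_stochastic N P ->
  (forall i, (i < N)%nat -> 0 < v i) ->
  (forall i, (i < N)%nat -> rsum N (fun j => P i j * v j) = lam * v i) -> lam = 1.
Proof.
  intros HN HP Hv Heig.
  destruct (exists_argmax N v HN) as [k [Hk Hmax]].
  destruct (exists_argmin N v HN) as [m [Hm Hmin]].
  pose proof (stochastic_average_le N P v (v k) k HP Hk Hmax).
  pose proof (stochastic_average_ge N P v (v m) m HP Hm Hmin).
  rewrite Heig in * by assumption.
  pose proof (Hv k Hk); pose proof (Hv m Hm); nra.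
Qed.

(* Maximum principle: the set where [v] attains its maximum is closed under transitions. *)
Lemma harmonic_const N P v : (0 < N)%nat -> row_stochastic N P -> irreducible N P ->
  (forall i, (i < N)%nat -> rsum N (fun j => P i j * v j) = v i) ->
  exists c, forall i, (i < N)%nat -> v i = c.
Proof.
  intros HN HP Hirr Hharm; pose proof HP as [Hnn Hrow].
  destruct (exists_argmax N v HN) as [k [Hk Hmax]]; exists (v k); intros i Hi.
  destruct (Hirr k i Hk Hi) as [n Hn].
  apply (mpow_pos_closed N P (fun i => v i = v k) Hnn) with (k := n) (i := k); auto.
  intros i' j Hi' Hj HPij Hvi.
  assert (Hgap : rsum N (fun l => P i' l * (v k - v l)) = 0).
  { transitivity (v k * rsum N (fun l => P i' l) - rsum N (fun l => P i' l * v l)).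
    - rewrite <- rsum_scal_l, <- rsum_minus; apply rsum_ext; intros; ring.
    - rewrite Hrow, Hharm, Hvi by assumption; ring. }
  assert (Hterm : P i' j * (v k - v j) = 0).
  { apply (rsum_eq0_nonneg N (fun l => P i' l * (v k - v l))); auto.
    intros l Hl; apply Rmult_le_pos; [auto|specialize (Hmax l Hl); lra]. }
  destruct (Rmult_integral _ _ Hterm); lra.
Qed.

(* Subtracting the largest multiple of [nu] below [mu] leaves a nonnegative invariant
   vector with a zero; positivity propagates along transitions, so it vanishes. *)
Lemma stationary_unique N P mu nu : irreducible N P ->
  (forall i j, (i < N)%nat -> (j < N)%nat -> 0 <= P i j) ->
  rsum N mu = 1 -> (forall j, (j < N)%nat -> rsum N (fun i => mu i * P i j) = mu j) ->
  stationary N P nu -> (forall i, (i < N)%nat -> 0 < nu i) ->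
  forall i, (i < N)%nat -> mu i = nu i.
Proof.
  intros Hirr Hnn Hmu Hmus [_ [Hnu Hnus]] Hpos.
  assert (HN : (0 < N)%nat) by (destruct N; simpl in Hmu; [lra|lia]).
  destruct (exists_argmin N (fun i => mu i / nu i) HN) as [k [Hk Hmin]].
  set (c := mu k / nu k) in *.
  set (w := fun i => mu i - c * nu i).
  assert (Hw : forall i, (i < N)%nat -> 0 <= w i).
  { intros i Hi; specialize (Hmin i Hi); pose proof (Hpos i Hi); unfold w.
    apply Rmult_le_compat_r with (r := nu i) in Hmin; [|lra].
    replace (mu i / nu i * nu i) with (mu i) in Hmin by (field; lra); lra. }
  assert (Hwk : w k = 0) by (unfold w, c; pose proof (Hpos k Hk); field; lra).
  assert (Hws : forall j, (j < N)%nat -> rsum N (fun i => w i * P i j) = w j).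
  { intros j Hj; unfold w; rewrite <- (Hmus j Hj), <- (Hnus j Hj), <- rsum_scal_l, <- rsum_minus.
    apply rsum_ext; intros; ring. }
  assert (Hw0 : forall i, (i < N)%nat -> w i = 0).
  { intros i Hi; destruct (Hw i Hi) as [Hwi|]; [exfalso|now symmetry].
    destruct (Hirr i k Hi Hk) as [n Hn].
    enough (0 < w k) by lra.
    apply (mpow_pos_closed N P (fun i => 0 < w i) Hnn) with (k := n) (i := i); auto.
    intros i' j Hi' Hj HPij Hwi'; rewrite <- Hws by exact Hj.
    apply Rlt_le_trans with (w i' * P i' j); [nra|].
    apply (rsum_term_le N (fun l => w l * P l j)); auto.
    intros l Hl; apply Rmult_le_pos; auto. }
  assert (Hc : c = 1).
  { assert (rsum N mu = c * rsum N nu) as Hsum.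
    { rewrite <- rsum_scal_l; apply rsum_ext; intros i Hi.
      specialize (Hw0 i Hi); unfold w in Hw0; lra. }
    rewrite Hmu, Hnu in Hsum; lra. }
  intros i Hi; specialize (Hw0 i Hi); unfold w in Hw0; rewrite Hc in Hw0; lra.
Qed.

Lemma Mmat_eigenvalue_pos N P beta alpha lam v : (0 < N)%nat -> row_stochastic N P ->
  (forall i, (i < N)%nat -> 0 < v i) ->
  (forall i, (i < N)%nat -> rsum N (fun j => Mmat P beta alpha i j * v j) = lam * v i) ->
  0 < lam.
Proof.
  intros HN [Hnn Hrow] Hv Heig.
  assert (0 < rsum N (fun j => P 0%nat j)) as Hrow0 by (rewrite Hrow; auto; lra).
  destruct (rsum_pos_term _ _ Hrow0) as [j [Hj HP]].
  assert (0 < Mmat P beta alpha 0 j * v j)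
    by (apply Rmult_lt_0_compat; [apply Mmat_pos|apply Hv]; auto).
  assert (Mmat P beta alpha 0 j * v j <= rsum N (fun j => Mmat P beta alpha 0 j * v j)).
  { apply (rsum_term_le N (fun j => Mmat P beta alpha 0 j * v j)); auto.
    intros l Hl; apply Rmult_le_pos; [apply Mmat_nonneg|left; auto]. }
  rewrite Heig in * by assumption; pose proof (Hv 0%nat HN); nra.
Qed.

Lemma spectral_radius_unique N A r r' :
  spectral_radius N A r -> spectral_radius N A r' -> r = r'.
Proof.
  intros [[a [b [Hab Hr]]] Hle] [[a' [b' [Hab' Hr']]] Hle'].
  specialize (Hle a' b' Hab'); specialize (Hle' a b Hab); lra.
Qed.

(* [b] times the first comparison plus [a] times the second cancels the [L] terms. *)
Lemma two_point_antitone a b Ha Hb La Lb Ra Rb :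
  0 <= a -> a < b -> 0 <= Ra -> 0 <= Rb ->
  Hb + a * Lb - a * (1 - a) * Rb <= Ha + a * La - a * (1 - a) * Ra ->
  Ha + b * La - b * (1 - b) * Ra <= Hb + b * Lb - b * (1 - b) * Rb ->
  Hb - b ^ 2 * Rb <= Ha - a ^ 2 * Ra.
Proof.
  intros Ha0 Hab HRa HRb Hat Hbt.
  assert (Hcross : (b - a) * (Hb - Ha - a * b * (Rb - Ra)) <= 0) by nra.
  assert (Hd : Hb - Ha - a * b * (Rb - Ra) <= 0).
  { apply Rmult_le_reg_l with (r := b - a); lra. }
  assert (0 <= (b - a) * (b * Rb + a * Ra)) by (apply Rmult_le_pos; nra).
  nra.
Qed.

Lemma Qmat_at_one N P beta lam v : (0 < N)%nat -> row_stochastic N P -> irreducible N P ->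
  (forall i, (i < N)%nat -> 0 < v i) ->
  (forall i, (i < N)%nat -> rsum N (fun j => Mmat P beta 1 i j * v j) = lam * v i) ->
  lam = 1 /\ forall i j, (i < N)%nat -> (j < N)%nat -> Qmat P beta 1 lam v i j = P i j.
Proof.
  intros HN HP Hirr Hv Heig; pose proof HP as [Hnn _].
  assert (HPv : forall i, (i < N)%nat -> rsum N (fun j => P i j * v j) = lam * v i).
  { intros i Hi; rewrite <- Heig by exact Hi; apply rsum_ext; intros; rewrite Mmat_1; auto. }
  assert (Hlam : lam = 1) by exact (stochastic_pos_eigenvalue N P v lam HN HP Hv HPv).
  subst lam; split; [reflexivity|].
  destruct (harmonic_const N P v HN HP Hirr) as [c Hc].
  { intros i Hi; rewrite HPv by exact Hi; ring. }
  intros i j Hi Hj; unfold Qmat; rewrite Mmat_1, (Hc i), (Hc j) by auto.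
  pose proof (Hv i Hi); rewrite Hc in * by exact Hi; field; lra.
Qed.

Section TiltedFamily.

Variables (N : nat) (P : nat -> nat -> R) (pi beta : nat -> R).
Variables (lam : R -> R) (v thbar : R -> nat -> R).
Hypothesis HP : row_stochastic N P.
Hypothesis Hirr : irreducible N P.
Hypothesis Hpi : stationary N P pi.
Hypothesis Hpipos : forall i, (i < N)%nat -> 0 < pi i.
Hypothesis Hv : forall alpha, 0 <= alpha <= 1 ->
  (forall i, (i < N)%nat -> 0 < v alpha i) /\
  (forall i, (i < N)%nat ->
     rsum N (fun j => Mmat P beta alpha i j * v alpha j) = lam alpha * v alpha i).
Hypothesis Hth : forall alpha, 0 <= alpha <= 1 ->
  stationary N (Qmat P beta alpha (lam alpha) (v alpha)) (thbar alpha).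

Let th alpha := theta P beta alpha (lam alpha) (v alpha) (thbar alpha).

Lemma dim_pos : (0 < N)%nat.
Proof. destruct Hpi as [_ [Hs _]]; destruct N; simpl in Hs; [lra|lia]. Qed.

Lemma lam_pos alpha : 0 <= alpha <= 1 -> 0 < lam alpha.
Proof.
  intros Ha; destruct (Hv alpha Ha) as [Hvpos Heig].
  exact (Mmat_eigenvalue_pos N P beta alpha (lam alpha) (v alpha) dim_pos HP Hvpos Heig).
Qed.

Lemma tilted_entropy_th alpha : 0 <= alpha <= 1 ->
  tilted_entropy N P beta alpha (th alpha) = ln (lam alpha).
Proof.
  intros Ha; destruct (Hv alpha Ha) as [Hva Heiga]; unfold th.
  apply tilted_entropy_theta; auto using lam_pos.
Qed.

Lemma tilted_entropy_th_le alpha gamma : 0 <= alpha <= 1 -> 0 <= gamma <= 1 ->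
  tilted_entropy N P beta alpha (th gamma) <= ln (lam alpha).
Proof.
  intros Ha Hg; destruct (Hv alpha Ha) as [Hva Heiga]; destruct (Hv gamma Hg) as [Hvg Heigg].
  apply (tilted_entropy_le N P beta alpha (lam alpha) (v alpha)); auto using lam_pos.
  apply theta_edge_measure; auto using lam_pos.
Qed.

Lemma energy_edge_mean alpha : 0 <= alpha <= 1 ->
  rsum N (fun i => thbar alpha i * (beta i)^2 / 2) = edge_mean N (th alpha) (fun i _ => beta i ^ 2 / 2).
Proof.
  intros Ha; destruct (Hv alpha Ha) as [Hva Heiga]; unfold th.
  rewrite edge_mean_theta_row; auto using lam_pos.
  apply rsum_ext; intros; unfold Rdiv; ring.
Qed.

Lemma thbar_at_one : lam 1 = 1 /\ forall i, (i < N)%nat -> thbar 1 i = pi i.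
Proof.
  assert (H1 : 0 <= 1 <= 1) by lra; destruct (Hv 1 H1) as [Hv1 Heig1].
  destruct (Qmat_at_one N P beta (lam 1) (v 1) dim_pos HP Hirr Hv1 Heig1) as [Hl1 HQ].
  split; [exact Hl1|].
  destruct (Hth 1 H1) as [_ [Hmass Hstat]].
  apply (stationary_unique N P (thbar 1) pi Hirr (proj1 HP) Hmass); auto.
  intros j Hj; rewrite <- Hstat by exact Hj; apply rsum_ext; intros; rewrite HQ; auto.
Qed.

Lemma entropy_at_one :
  Hent N (th 1) = - rsum N (fun i => rsum N (fun j => pi i * xlnx (P i j))).
Proof.
  assert (H1 : 0 <= 1 <= 1) by lra; destruct (Hv 1 H1) as [Hv1 Heig1].
  destruct (Qmat_at_one N P beta (lam 1) (v 1) dim_pos HP Hirr Hv1 Heig1) as [Hl1 HQ].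
  destruct thbar_at_one as [_ Hpi1].
  pose proof (tilted_entropy_th 1 H1) as Heq.
  rewrite Hl1, ln_1 in Heq; unfold tilted_entropy in Heq.
  enough (HL : edge_mean N (th 1) (fun i j => ln (P i j)) =
                rsum N (fun i => rsum N (fun j => pi i * xlnx (P i j)))) by lra.
  unfold edge_mean, th, theta; apply rsum_ext; intros i Hi; apply rsum_ext; intros j Hj.
  rewrite HQ, Hpi1 by assumption; unfold xlnx.
  destruct (Req_EM_T (P i j) 0) as [->|]; ring.
Qed.

Lemma energy_at_one :
  rsum N (fun i => thbar 1 i * (beta i)^2 / 2) = rsum N (fun i => pi i * (beta i)^2 / 2).
Proof.
  destruct thbar_at_one as [_ Hpi1]; apply rsum_ext; intros i Hi; rewrite Hpi1; auto.
Qed.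

Lemma entropy_at_zero rho0 :
  spectral_radius N (P0 P) rho0 -> spectral_radius N (Mmat P beta 0) (lam 0) ->
  Hent N (th 0) = ln rho0.
Proof.
  intros Hrho0 Hlam0; rewrite Mmat_0 in Hlam0.
  assert (H0 : 0 <= 0 <= 1) by lra; pose proof (tilted_entropy_th 0 H0) as Heq.
  rewrite (spectral_radius_unique N (P0 P) (lam 0) rho0 Hlam0 Hrho0) in Heq.
  unfold tilted_entropy in Heq; lra.
Qed.

(* [ln lam] is the maximum over [gamma] of the tilted entropy of [th gamma], attained at
   [gamma = alpha]; comparing two such maxima yields the monotonicity. *)
Lemma entropy_minus_energy_antitone a b : 0 <= a -> a <= b -> b <= 1 ->
  Hent N (th b) - b ^ 2 * rsum N (fun i => thbar b i * (beta i)^2 / 2) <=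
  Hent N (th a) - a ^ 2 * rsum N (fun i => thbar a i * (beta i)^2 / 2).
Proof.
  intros Ha Hab Hb; assert (Ha1 : 0 <= a <= 1) by lra; assert (Hb1 : 0 <= b <= 1) by lra.
  destruct (Req_dec a b) as [<-|Hne]; [lra|].
  rewrite !energy_edge_mean by assumption.
  assert (Hnonneg : forall g, 0 <= g <= 1 -> 0 <= edge_mean N (th g) (fun i _ => beta i ^ 2 / 2)).
  { intros g Hg; rewrite <- energy_edge_mean by exact Hg; apply rsum_nonneg; intros i Hi.
    pose proof (proj1 (Hth g Hg) i Hi); pose proof (pow2_ge_0 (beta i)).
    unfold Rdiv; apply Rmult_le_pos; [apply Rmult_le_pos|]; lra. }
  pose proof (tilted_entropy_th_le a b Ha1 Hb1); pose proof (tilted_entropy_th_le b a Hb1 Ha1).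
  rewrite <- (tilted_entropy_th a Ha1) in *; rewrite <- (tilted_entropy_th b Hb1) in *.
  unfold tilted_entropy in *.
  apply two_point_antitone with (La := edge_mean N (th a) (fun i j => ln (P i j)))
    (Lb := edge_mean N (th b) (fun i j => ln (P i j))); auto; lra.
Qed.
End TiltedFamily.

Theorem lemma11 (N : nat) (P : nat -> nat -> R) (pi beta : nat -> R) (rho0 : R)
  (lam : R -> R) (v thbar : R -> nat -> R)
  (HP : row_stochastic N P) (Hirr : irreducible N P) (Hap : aperiodic N P)
  (Hpi : stationary N P pi) (Hpipos : forall i, (i < N)%nat -> 0 < pi i)
  (Hrho0 : spectral_radius N (P0 P) rho0)
  (Hlam : forall alpha, 0 <= alpha <= 1 ->
            spectral_radius N (Mmat P beta alpha) (lam alpha))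
  (Hv : forall alpha, 0 <= alpha <= 1 ->
          (forall i, (i < N)%nat -> 0 < v alpha i) /\
          (forall i, (i < N)%nat ->
             rsum N (fun j => Mmat P beta alpha i j * v alpha j) = lam alpha * v alpha i))
  (Hth : forall alpha, 0 <= alpha <= 1 ->
           stationary N (Qmat P beta alpha (lam alpha) (v alpha)) (thbar alpha)) :
  let Hf := fun alpha => Hent N (theta P beta alpha (lam alpha) (v alpha) (thbar alpha)) in
  let Rf := fun alpha => rsum N (fun i => thbar alpha i * (beta i)^2 / 2) in
  (Hf 1 = - rsum N (fun i => rsum N (fun j => pi i * xlnx (P i j))) /\
   Rf 1 = rsum N (fun i => pi i * (beta i)^2 / 2)) /\
  Hf 0 = ln rho0 /\
  (forall a b, 0 <= a -> a <= b -> b <= 1 ->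
     Hf b - b^2 * Rf b <= Hf a - a^2 * Rf a).
Proof.
  intros Hf Rf; subst Hf Rf; cbv beta.
  split; [split|split].
  - eapply entropy_at_one; eassumption.
  - eapply energy_at_one; eassumption.
  - eapply entropy_at_zero; try eassumption.
    apply Hlam; lra.
  - intros a b Ha Hab Hb; eapply entropy_minus_energy_antitone; eassumption.
Qed.
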